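(* Let $\Lambda$ be a finite cubical complex, $k\ge1$, $q\ge2$ an integer, $x_{\mathbf{c}}\in(0,1)$ for $\mathbf{c}\in\Lambda_k$. Let $\Omega=\{0,1\}^{\Lambda_k}$, $\Sigma=\ker(\partial_k)\subset C_k$, $f:\Omega\to2^\Sigma$, $f(\omega)=\Sigma^\downarrow(\omega):=\{\eta\in\Sigma\mid\mathrm{supp}(\eta)\subset\omega\}$, and $$\rho[\omega]\propto\prod_{\mathbf{c}\in\Lambda_k(\omega)}\frac{x_{\mathbf{c}}}{1-x_{\mathbf{c}}}\ (\omega\in\Omega),\qquad\gamma[\eta]\propto1\ (\eta\in\Sigma).$$ Let $\mathscr{P}$ be the probability measure on $\Omega\times\Sigma$ with $\mathscr{P}[\omega,\eta]\propto\rho[\omega]\gamma[\eta]\mathbf{1}[\eta\in f(\omega)]$. Then: (a) The marginal $\mathscr{P}_\Sigma$ equals $\ell^q_{\Lambda_k,x}$, and for $\omega\in\Omega$ the conditional measure $\mathscr{P}[\cdot\mid\omega]$ is uniform on $\Sigma^\downarrow(\omega)$. (b) The marginal $\mathscr{P}_\Omega$ equals $\phi^q_{\Lambda_k,p}$ with $p$ determined by $x_{\mathbf{c}}=\frac{p_{\mathbf{c}}}{p_{\mathbf{c}}+q(1-p_{\mathbf{c}})}$. For each $\eta\in\Sigma$, $\mathscr{P}[\cdot\mid\eta]=\mathbb{P}_x\cup\delta_{\mathrm{supp}(\eta)}$, Bernoulli percolation on $\Lambda_k$ with parameters $(x_{\mathbf{c}})$ conditioned on all $k$-cells of $\mathrm{supp}(\eta)$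 being open.
   Context: A finite cubical complex $\Lambda$ consists of finite sets $\Lambda_j$ of $j$-cells (copies of $\{0,1\}^j$) closed under taking faces; $F_i^\pm(\mathbf{c})$ are the faces $\{x_i=1\},\{x_i=0\}$ of a $j$-cell. Each $j$-cell ($j\ge1$) has two orientations (for $j\ge2$ an ordering $e_1\wedge\dots\wedge e_j$ of the cell's edges at a root vertex $v$ modulo even permutations, reversed when moving the root across an edge; faces $F_i^\pm(\mathfrak{c})$ containing $v$ inherit $e_1\wedge\cdots\wedge\widehat{e_i}\wedge\cdots\wedge e_j$ rooted at $v$; for $j=1$ the orientations $(v,w),(w,v)$). $C_j=\{\sigma\in(\mathbb{Z}/q\mathbb{Z})^{\mathcal{O}(\Lambda_j)}\mid\sigma_{-\mathfrak{c}}=-\sigma_{\mathfrak{c}}\}$, $C_0=(\mathbb{Z}/q\mathbb{Z})^{\Lambda_0}$; $\partial_j:C_j\to C_{j-1}$ is linear with $\partial_j\mathbf{1}^{\mathfrak{c}}=\sum_{i=1}^j(-1)^{i+1}(\mathbf{1}^{F_i^+(\mathfrak{c})}-\mathbf{1}^{F_i^-(\mathfrak{c})})$ ($j\ge2$), $\partial_1\mathbf{1}^{(v,w)}=\mathbf{1}_w-\mathbf{1}_v$, $\partial_0:=0$. $\mathrm{supp}(\eta)$ is the set of $k$-cells on which $\eta$ is nonzero. The $q$-flow model is $\ell^q_{\Lambda_k,x}[\eta]\propto\prod_{\mathbf{c}\in\mathrm{supp}(\eta)}x_{\mathbf{c}}$ on $\ker(\partial_k)$. Elements $\omega\in\{0,1\}^{\Lambda_k}$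 are identified with $k$-spanning subcomplexes (all cells of dimension $<k$, the $k$-cells $\Lambda_k(\omega)$, nothing higher); $\partial^\omega_k$ is $\partial_k$ restricted to chains supported on $\Lambda_k(\omega)$, $\partial^\omega_{k-1}=\partial_{k-1}$, and $\phi^q_{\Lambda_k,p}[\omega]\propto\frac{|\ker(\partial^\omega_{k-1})|}{|\mathrm{Im}(\partial^\omega_k)|}\prod_{\mathbf{c}\in\Lambda_k(\omega)}\frac{p_{\mathbf{c}}}{1-p_{\mathbf{c}}}$. $\mathbb{P}_x$ is Bernoulli percolation on $\Lambda_k$; $\pi\cup\nu$ is the law of the union of independent samples; $\delta$ is a Dirac mass. *)

From HB Require Import structures.
From mathcomp Require Import all_boot all_order all_algebra.
From mathcomp Require Import perm.
Set Implicit Arguments. Unset Strict Implicit. Unset Printing Implicit Defensive.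
Import Order.TTheory GRing.Theory Num.Theory.
Local Open Scope ring_scope.

(* A j-cell is an embedded copy of {0,1}^j in a finite vertex set V,    *)
(* i.e. an injective "parametrisation" sigma : {0,1}^j -> V, considered *)
(* up to the automorphisms of the cube (the hyperoctahedral group).     *)
(* Orientations: the orientation carried by a parametrisation sigma is  *)
(* e_1 /\ ... /\ e_j rooted at sigma(0); precomposing with a cube       *)
(* automorphism g changes it by sign g = det g (sign of the coordinate  *)
(* permutation times (-1)^(number of reflected coordinates)), matching  *)
(* the rule: modulo even permutations, reversed when moving the root    *)
(* across an edge.                                                      *)

Section Cubical.
Variable V : finType.

Definition param (j : nat) := {ffun {ffun 'I_j -> bool} -> V}.

Definition aut (j : nat) := ({perm 'I_j} * {ffun 'I_j -> bool})%type.

Definition act j (s : param j) (g : aut j) : param j :=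
  [ffun x : {ffun 'I_j -> bool} => s [ffun i => addb (x (g.1 i)) (g.2 i)]].

(* the face F_(i+1)^e = {x_(i+1) = e} of a (j+1)-cell (i is 0-based),
   with its inherited parametrisation *)
Definition face j (s : param j.+1) (i : 'I_j.+1) (e : bool) : param j :=
  [ffun x : {ffun 'I_j -> bool} =>
     s [ffun m : 'I_j.+1 => if unlift i m is Some m' then x m' else e]].

Definition orbit j (s : param j) : {set param j} := [set act s g | g : aut j].

(* Lambda j = the set of parametrisations of j-cells of the complex *)
Definition is_cubical_complex (L : forall j, {set param j}) : Prop :=
  [/\ (forall j (s : param j), s \in L j -> injective s),
      (forall j (s : param j) (g : aut j), s \in L j -> act s g \in L j) &
      (forall j (s : param j.+1) (i : 'I_j.+1) (e : bool),
          s \in L j.+1 -> face s i e \in L j)].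

Definition cells (L : forall j, {set param j}) j : {set {set param j}} :=
  [set orbit s | s in L j].

Definition cellT (L : forall j, {set param j}) j :=
  {O : {set param j} | O \in cells L j}.

Section Chains.
Variable q : nat.
Variable L : forall j, {set param j}.

Definition chain j := {ffun param j -> 'Z_q}.

Definition sign j (g : aut j) : 'Z_q :=
  (-1) ^+ (odd_perm g.1 + #|[set i | g.2 i]|)%N.

(* C_j : antisymmetric functions on oriented j-cells *)
Definition is_chain j (f : chain j) : bool :=
  [forall s, (s \notin L j) ==> (f s == 0)] &&
  [forall s, forall g : aut j, f (act s g) == sign g * f s].

Definition ind j (s : param j) : chain j :=
  [ffun t => \sum_(g : aut j | act s g == t) sign g].

Definition bd_basis j (s : param j.+1) : chain j :=
  [ffun t => \sum_(i < j.+1)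
               (-1) ^+ i * (ind (face s i true) t - ind (face s i false) t)].

Definition is_rep j (s : param j) : bool := [pick t in orbit s] == Some s.

Definition bdS j (f : chain j.+1) : chain j :=
  [ffun t => \sum_(s in L j.+1 | is_rep s) f s * bd_basis s t].

(* partial_n : C_n -> C_(n-1), with partial_0 := 0 *)
Definition bd n : chain n -> chain n.-1 :=
  match n as m return chain m -> chain m.-1 with
  | 0 => fun _ => 0
  | j.+1 => @bdS j
  end.

Definition supp j (f : chain j) : {set cellT L j} :=
  [set c : cellT L j | [exists s in val c, f s != 0]].

Definition kerbd n : {set chain n} := [set f : chain n | is_chain f && (bd f == 0)].

Definition Sigma k := kerbd k.

Definition Sigma_down k (w : {set cellT L k}) : {set chain k} :=
  [set eta in Sigma k | supp eta \subset w].

Definition Im_bd k (w : {set cellT L k}) : {set chain k.-1} :=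
  [set bd f | f in [set f : chain k | is_chain f && (supp f \subset w)]].

Section Measures.
Variable R : realFieldType.
Variable k : nat.
Local Notation Om := {set cellT L k}.

Definition rho_w (x : cellT L k -> R) (w : Om) : R :=
  \prod_(c in w) (x c / (1 - x c)).
Definition rho (x : cellT L k -> R) (w : Om) : R :=
  rho_w x w / \sum_(w' : Om) rho_w x w'.
Definition gamma (eta : chain k) : R :=
  (eta \in Sigma k)%:R / #|Sigma k|%:R.

Definition Pw (x : cellT L k -> R) (w : Om) (eta : chain k) : R :=
  rho x w * gamma eta * (eta \in Sigma_down w)%:R.
Definition Pjoint (x : cellT L k -> R) (w : Om) (eta : chain k) : R :=
  Pw x w eta / \sum_(w' : Om) \sum_(eta' : chain k) Pw x w' eta'.

Definition margSigma x (eta : chain k) : R := \sum_(w : Om) Pjoint x w eta.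
Definition margOmega x (w : Om) : R := \sum_(eta : chain k) Pjoint x w eta.
Definition condOmega x (w : Om) (eta : chain k) : R := Pjoint x w eta / margOmega x w.
Definition condSigma x (eta : chain k) (w : Om) : R := Pjoint x w eta / margSigma x eta.

Definition uniform (A : {set chain k}) (eta : chain k) : R :=
  (eta \in A)%:R / #|A|%:R.

Definition ell_w (x : cellT L k -> R) (eta : chain k) : R :=
  (eta \in Sigma k)%:R * \prod_(c in supp eta) x c.
Definition ell (x : cellT L k -> R) (eta : chain k) : R :=
  ell_w x eta / \sum_(eta' : chain k) ell_w x eta'.

Definition phi_w (p : cellT L k -> R) (w : Om) : R :=
  #|kerbd k.-1|%:R / #|Im_bd w|%:R * \prod_(c in w) (p c / (1 - p c)).
Definition phi (p : cellT L k -> R) (w : Om) : R :=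
  phi_w p w / \sum_(w' : Om) phi_w p w'.

Definition bern (x : cellT L k -> R) (w : Om) : R :=
  \prod_(c in w) x c * \prod_(c in ~: w) (1 - x c).
Definition dirac (S : Om) (w : Om) : R := (w == S)%:R.
Definition union_law (mu nu : Om -> R) (w : Om) : R :=
  \sum_(a : Om) \sum_(b : Om) mu a * nu b * ((a :|: b) == w)%:R.

End Measures.
End Chains.
End Cubical.

From Pilot Require Import Defs.
From HB Require Import structures.
From mathcomp Require Import all_boot all_order all_algebra.
From mathcomp Require Import perm ring.
Set Implicit Arguments. Unset Strict Implicit. Unset Printing Implicit Defensive.
Import Order.TTheory GRing.Theory Num.Theory.
Local Open Scope ring_scope.
Local Notation orbit := Defs.orbit.

(* Write r(w) = prod_(c in w) x_c / (1 - x_c).  Since Sigma^down(w) lies in Sigma, the joint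
   weight is proportional to r(w) 1[eta in Sigma, supp eta <= w], so all four laws are ratios
   of sums over subsets of cells of products over cells, and such sums factor cell by cell:
   summing r over w containing S = supp eta gives prod_c (1 - x_c)^-1 prod_(c in S) x_c (the
   flow weight), and r(w) 1[S <= w] divided by that sum is the law of a Bernoulli(x) set
   united with S.  Summing over eta instead gives r(w) |Sigma^down(w)|, and
   |Sigma^down(w)| |Im d^w| = q^|w|: the boundary map restricted to the chains supported in w
   has kernel Sigma^down(w), and those chains are in bijection with ('Z_q)^w because the cube
   automorphisms act freely on the parametrisations of a cell.  With p/(1-p) = q x/(1-x) this
   turns r(w) |Sigma^down(w)| into the random-cluster weight, up to a constant. *)

(* The library does not join the finType and zmodType structures of finite functions. *)
HB.instance Definition _ (I : finType) (M : finZmodType) := GRing.Zmodule.on {ffun I -> M}.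

Lemma card_kernel_mul_image (aT bT : finZmodType) (A : {set aT}) (phi : aT -> bT) :
  0 \in A -> {in A &, forall a b, a - b \in A} -> {morph phi : a b / a - b} ->
  #|A| = (#|[set a in A | phi a == 0%R]| * #|phi @: A|)%N.
Proof.
move=> A0 AB phiB.
have AD a b : a \in A -> b \in A -> a + b \in A.
  by move=> aA bA; rewrite -[b]opprK AB // -sub0r AB.
have phi0 : phi 0 = 0 by rewrite -(subrr 0) phiB subrr.
have phiN b : phi (- b) = - phi b by rewrite -sub0r phiB phi0 sub0r.
have phiD a b : phi (a + b) = phi a + phi b.
  by rewrite -[in LHS](opprK b) phiB phiN opprK.
rewrite -sum1_card (partition_big_imset phi) /= mulnC -sum_nat_const.
apply: eq_bigr => _ /imsetP[a0 a0A ->]; rewrite sum1_card -cardsE.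
have -> : [set a in A | phi a == phi a0] = (+%R^~ a0) @: [set a in A | phi a == 0].
  apply/setP => a; rewrite inE; apply/andP/imsetP => [[aA /eqP pa]|[b]].
    by exists (a - a0); rewrite ?subrK // inE AB //= phiB pa subrr.
  by rewrite inE => /andP[bA /eqP pb] ->; rewrite AD // phiD pb add0r.
by rewrite card_imset //; apply: addIr.
Qed.

Lemma sum_set_prod (T : finType) (R : comPzSemiRingType) (H : T -> bool -> R) :
  \sum_(A : {set T}) \prod_c H c (c \in A) = \prod_c (H c true + H c false).
Proof.
by rewrite bigA_distr; apply: eq_bigr => A _; apply: eq_bigr => c _; case: (c \in A).
Qed.

Lemma prod_natr_forall (T : finType) (R : comPzSemiRingType) (b : pred T) :
  \prod_c ((b c)%:R : R) = [forall c, b c]%:R.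
Proof.
have [/forallP b_all|/forallPn[c /negbTE bc]] := boolP [forall c, b c].
  by rewrite big1 // => c _; rewrite b_all.
by rewrite (bigD1 c) //= bc mul0r.
Qed.

Lemma sum_natr_mem (T : finType) (R : pzSemiRingType) (A : {set T}) :
  \sum_t ((t \in A)%:R : R) = #|A|%:R.
Proof.
rewrite -natr_sum -sum1_card; congr _%:R.
by rewrite [RHS]big_mkcond; apply: eq_bigr => t _; case: (t \in A).
Qed.

Lemma sumr_gt0 (I : finType) (R : numDomainType) (F : I -> R) (i0 : I) :
  (forall i, 0 < F i) -> 0 < \sum_i F i.
Proof.
by move=> F_gt0; rewrite (bigD1 i0) //= ltr_wpDr ?F_gt0 ?sumr_ge0 // => i _; apply/ltW.
Qed.

Lemma div_sum_scale (I : finType) (R : fieldType) (F G : I -> R) (a : R) i :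
  a != 0 -> (forall i, F i = a * G i) -> F i / \sum_i0 F i0 = G i / \sum_i0 G i0.
Proof.
move=> a0 FaG; under eq_bigr do rewrite FaG.
by rewrite -mulr_sumr FaG invfM mulrACA mulfV // mul1r.
Qed.

Lemma odds_rc_param (R : fieldType) (q p x : R) :
  q != 0 -> x != 0 -> x != 1 -> x = p / (p + q * (1 - p)) ->
  p / (1 - p) = q * (x / (1 - x)).
Proof.
move=> q0 x0 x1 xE.
have d0 : p + q * (1 - p) != 0 by apply: contra_neq x0 => d0; rewrite xE d0 invr0 mulr0.
have p1 : 1 - p != 0.
  apply: contra_neq x1 => /eqP; rewrite subr_eq0 => /eqP p1.
  by rewrite xE -p1 subrr mulr0 addr0 divrr ?unitr1.
rewrite xE; field.
by rewrite d0 p1 addrC addKr mulf_neq0.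
Qed.

Section CubeAutomorphisms.
Variables (V : finType) (j : nat).
Implicit Types (s : param V j) (g h : aut j).

Definition aut_mul g h : aut j :=
  ((g.1 * h.1)%g, [ffun i => h.2 (g.1 i) (+) g.2 i]).
Definition aut_inv h : aut j := ((h.1^-1)%g, [ffun i => h.2 ((h.1^-1)%g i)]).
Definition aut1 : aut j := (1%g, [ffun => false]).

Lemma actM s g h : act (act s g) h = act s (aut_mul g h).
Proof.
apply/ffunP => y; rewrite !ffunE; congr (s _); apply/ffunP => i.
by rewrite !ffunE permM addbA.
Qed.

Lemma act1 s : act s aut1 = s.
Proof.
apply/ffunP => y; rewrite !ffunE; congr (s _); apply/ffunP => i.
by rewrite !ffunE perm1 addbF.
Qed.

Lemma actK s h : act (act s h) (aut_inv h) = s.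
Proof.
rewrite actM -[RHS]act1; apply/ffunP => y; rewrite !ffunE; congr (s _).
by apply/ffunP => i; rewrite !ffunE permM permK perm1 addbb.
Qed.

Lemma act_free s : injective s -> injective (act s).
Proof.
move=> s_inj g h /ffunP act_gh.
have coord_eq (y : {ffun 'I_j -> bool}) :
    [ffun i => y (g.1 i) (+) g.2 i] = [ffun i => y (h.1 i) (+) h.2 i].
  by apply: s_inj; have := act_gh y; rewrite !ffunE.
have e2 : g.2 = h.2.
  by apply/ffunP => i; have /ffunP/(_ i) := coord_eq [ffun => false]; rewrite !ffunE.
have e1 : g.1 = h.1.
  apply/permP => i; have /ffunP/(_ i) := coord_eq [ffun m => m == g.1 i].
  by rewrite !ffunE eqxx e2 => /addIb/esym/eqP.
by case: g h e1 e2 {act_gh coord_eq} => [? ?] [? ?] /= -> ->.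
Qed.

Lemma signE q g : sign q g = (-1) ^+ odd_perm g.1 * \prod_i (-1) ^+ g.2 i.
Proof.
rewrite /sign exprD prodrXr -sum1_card big_mkcond /=.
by congr (_ * _ ^+ _); apply: eq_bigr => i _; rewrite inE; case: (g.2 i).
Qed.

Lemma signM q g h : sign q (aut_mul g h) = sign q g * sign q h.
Proof.
rewrite !signE /= odd_permM signr_addb.
under eq_bigr do rewrite ffunE signr_addb.
rewrite big_split /= [X in _ * (X * _)](_ : _ = \prod_i (-1) ^+ h.2 i).
  by rewrite -!mulrA; congr (_ * _); rewrite mulrA mulrC.
by rewrite [RHS](reindex_perm g.1).
Qed.

Lemma sign1 q : sign q aut1 = 1.
Proof.
by rewrite signE odd_perm1 big1 ?mulr1 // => i _; rewrite ffunE.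
Qed.

End CubeAutomorphisms.

Section Chains.
Variables (V : finType) (q : nat) (L : forall j, {set param V j}).
Hypothesis L_complex : is_cubical_complex L.
Local Notation chain j := (chain V q j).

Lemma is_chainP j (f : chain j) :
  reflect ((forall s, s \notin L j -> f s = 0) /\
           (forall s g, f (act s g) = sign q g * f s)) (is_chain L f).
Proof.
apply: (iffP andP) => [[/forallP f0 /forallP fact]|[f0 fact]]; split.
- by move=> s sL; move: (f0 s); rewrite sL => /eqP.
- by move=> s g; move/forallP: (fact s) => /(_ g) /eqP.
- by apply/forallP => s; apply/implyP => /f0 ->.
- by apply/forallP => s; apply/forallP => g; rewrite fact.
Qed.

Lemma is_chain0 j : is_chain L (0 : chain j).
Proof. by apply/is_chainP; split=> *; rewrite !ffunE ?mulr0. Qed.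

Lemma is_chainB j (f g : chain j) : is_chain L f -> is_chain L g -> is_chain L (f - g).
Proof.
move=> /is_chainP[f0 fact] /is_chainP[g0 gact]; apply/is_chainP; split.
  by move=> s sL; rewrite !ffunE f0 // g0 // subrr.
by move=> s h; rewrite !ffunE fact gact mulrBr.
Qed.

Lemma supp_subP j (f : chain j) (w : {set cellT L j}) :
  reflect (forall c, c \notin w -> forall s, s \in val c -> f s = 0) (supp L f \subset w).
Proof.
apply: (iffP subsetP) => [fw c cw s sc|fw c].
  apply/eqP/negPn/negP => fs; move/negP: cw; apply.
  by apply: fw; rewrite inE; apply/existsP; exists s; rewrite sc.
rewrite inE => /existsP[s /andP[sc /eqP fs]]; apply/negPn/negP => cw.
exact/fs/(fw c cw).
Qed.

Lemma supp0_sub j (w : {set cellT L j}) : supp L (0 : chain j) \subset w.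
Proof. by apply/supp_subP => *; rewrite ffunE. Qed.

Lemma supp_subB j (f g : chain j) (w : {set cellT L j}) :
  supp L f \subset w -> supp L g \subset w -> supp L (f - g) \subset w.
Proof.
move=> /supp_subP fw /supp_subP gw; apply/supp_subP => c cw s sc.
by rewrite !ffunE (fw c cw s sc) (gw c cw s sc) subrr.
Qed.

Lemma bdSB j : {morph @bdS V q L j : f g / f - g}.
Proof.
move=> f g; apply/ffunP => t; rewrite !ffunE -sumrB.
by apply: eq_bigr => s _; rewrite !ffunE mulrBl.
Qed.

Lemma kerbd0 n : 0 \in kerbd q L n.
Proof.
rewrite inE is_chain0; case: n => [|n] //=.
by apply/eqP/ffunP => t; rewrite !ffunE big1 // => s _; rewrite ffunE mul0r.
Qed.

Lemma Sigma_down0 n (w : {set cellT L n}) : 0 \in Sigma_down q w.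
Proof. by rewrite inE kerbd0 supp0_sub. Qed.

Lemma orbit_refl j (s : param V j) : s \in orbit s.
Proof. by apply/imsetP; exists (aut1 j); rewrite ?act1. Qed.

Lemma orbit_sub j (s u : param V j) : u \in orbit s -> orbit u \subset orbit s.
Proof.
move=> /imsetP[g _ ->]; apply/subsetP => _ /imsetP[h _ ->].
by rewrite actM; apply/imsetP; exists (aut_mul g h).
Qed.

Lemma orbit_eq j (s u : param V j) : u \in orbit s -> orbit u = orbit s.
Proof.
move=> us; apply/eqP; rewrite eqEsubset orbit_sub //=; apply: orbit_sub.
by case/imsetP: us => g _ ->; apply/imsetP; exists (aut_inv g); rewrite ?actK.
Qed.

Lemma mem_act_L j (s : param V j) g : (act s g \in L j) = (s \in L j).
Proof.
case: L_complex => _ L_act _; apply/idP/idP => [|/L_act//].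
by move=> /(L_act _ _ (aut_inv g)); rewrite actK.
Qed.

Lemma orbit_subL j (s : param V j) : s \in L j -> orbit s \subset L j.
Proof. by move=> sL; apply/subsetP => _ /imsetP[g _ ->]; rewrite mem_act_L. Qed.

Lemma cellP j (c : cellT L j) : exists2 s, s \in L j & val c = orbit s.
Proof. by case: c => O /= /imsetP[s sL ->]; exists s. Qed.

Lemma cell_subL j (c : cellT L j) s : s \in val c -> s \in L j.
Proof. by case: (cellP c) => s0 s0L -> /(subsetP (orbit_subL s0L)). Qed.

Lemma cell_orbit j (c : cellT L j) s : s \in val c -> orbit s = val c.
Proof. by case: (cellP c) => s0 _ -> /orbit_eq. Qed.

Lemma pick_orbit j (s : param V j) :
  exists2 u, [pick v in orbit s] = Some u & exists g, act u g = s.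
Proof.
case: pickP => [u us|/(_ s)]; last by rewrite orbit_refl.
exists u => //; move: (orbit_refl s); rewrite -(orbit_eq us).
by case/imsetP=> g _ ->; exists g.
Qed.

Section CellValues.
Variable j : nat.
Local Notation cell := (cellT L j).

Definition cell_values (f : chain j) : {ffun cell -> 'Z_q} :=
  finfun (fun c : cell => if [pick u in val c] is Some u then f u else 0 : 'Z_q).

Definition orbit_value (a : {ffun cell -> 'Z_q}) (O : {set param V j}) : 'Z_q :=
  if insub O is Some c then a c else 0.

Definition chain_of_values (a : {ffun cell -> 'Z_q}) : chain j :=
  [ffun t => if t \in L j then
     if [pick u in orbit t] is Some u then
       if [pick g | act u g == t] is Some g then sign q g * orbit_value a (orbit t)
       else 0
     else 0
   else 0].

Lemma chain_of_valuesE a (t u : param V j) g :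
  t \in L j -> [pick v in orbit t] = Some u -> act u g = t ->
  chain_of_values a t = sign q g * orbit_value a (orbit t).
Proof.
move=> tL pick_u ugt; rewrite ffunE tL pick_u.
have uL : u \in L j.
  by apply: (subsetP (orbit_subL tL)); move: pick_u; case: pickP => // ? ? [<-].
case: pickP => [g' /eqP ug't|/(_ g)]; last by rewrite ugt eqxx.
case: L_complex => L_inj _ _.
by rewrite (act_free (L_inj _ _ uL) (etrans ug't (esym ugt))).
Qed.

Lemma is_chain_of_values a : is_chain L (chain_of_values a).
Proof.
apply/is_chainP; split=> [s sL|s g]; first by rewrite ffunE (negbTE sL).
have [sL|sNL] := boolP (s \in L j); last by rewrite !ffunE mem_act_L (negbTE sNL) mulr0.
have orbit_sg : orbit (act s g) = orbit s by apply: orbit_eq; apply/imsetP; exists g.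
have [u pick_u [g0 ug0s]] := pick_orbit s.
rewrite (chain_of_valuesE a sL pick_u ug0s).
rewrite (chain_of_valuesE (u := u) (g := aut_mul g0 g) a) ?mem_act_L ?orbit_sg //.
  by rewrite signM -mulrA mulrCA.
by rewrite -actM ug0s.
Qed.

Lemma cell_valuesK a : cell_values (chain_of_values a) = a.
Proof.
apply/ffunP => c; rewrite ffunE; case pick_u: [pick u in val c] => [u|]; last first.
  by case: (cellP c) => s _ cs; move: pick_u; case: pickP => // /(_ s); rewrite cs orbit_refl.
have uc : u \in val c by move: pick_u; case: pickP => // ? ? [<-].
rewrite (chain_of_valuesE (u := u) (g := aut1 j) a (cell_subL uc)) ?act1 ?(cell_orbit uc) //.
by rewrite sign1 mul1r /orbit_value valK.
Qed.

Lemma cell_values_inj (f g : chain j) :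
  is_chain L f -> is_chain L g -> cell_values f = cell_values g -> f = g.
Proof.
move=> /is_chainP[f0 fact] /is_chainP[g0 gact] /ffunP fg; apply/ffunP => t.
have [tL|tNL] := boolP (t \in L j); last by rewrite f0 ?g0.
have orbit_cell : orbit t \in cells L j by apply/imsetP; exists t.
move: (fg (Sub (orbit t) orbit_cell)); rewrite !ffunE SubK.
by have [u -> [h <-]] := pick_orbit t; rewrite fact gact => ->.
Qed.

Lemma cell_values_on (f : chain j) (w : {set cell}) :
  supp L f \subset w -> cell_values f \in pffun_on 0 w predT.
Proof.
move=> /supp_subP fw; apply/pffun_onP; split=> //; apply/subsetP => c.
rewrite inE; apply: contraR => cw; apply/eqP; rewrite ffunE.
by case: pickP => // u uc; apply: fw cw u uc.
Qed.

Lemma supp_chain_of_values a (w : {set cell}) :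
  a \in pffun_on 0 w predT -> supp L (chain_of_values a) \subset w.
Proof.
case/pffun_onP => /subsetP a_on _; apply/supp_subP => c cw s sc.
have ac : a c = 0 by apply/eqP; apply: contraR cw => /a_on.
have [u pick_u [g ugs]] := pick_orbit s.
rewrite (chain_of_valuesE a (cell_subL sc) pick_u ugs) (cell_orbit sc).
by rewrite /orbit_value valK ac mulr0.
Qed.

Lemma card_chains_on (w : {set cell}) :
  #|[set f : chain j | is_chain L f && (supp L f \subset w)]| = (#|'Z_q| ^ #|w|)%N.
Proof.
set C := [set f | _]; rewrite -(card_in_imset (f := cell_values)); last first.
  by move=> f g; rewrite !inE => /andP[fC _] /andP[gC _]; apply: cell_values_inj.
suff -> : cell_values @: C = [set a in pffun_on 0 w predT] by rewrite cardsE card_pffun_on.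
apply/setP => a; rewrite inE; apply/imsetP/idP => [[f]|a_on].
  by rewrite inE => /andP[_ fw] ->; apply: cell_values_on.
exists (chain_of_values a); last by rewrite cell_valuesK.
by rewrite inE is_chain_of_values supp_chain_of_values.
Qed.

End CellValues.

Lemma card_Sigma_down_mul_Im_bd j (w : {set cellT L j.+1}) :
  (#|Sigma_down q w| * #|Im_bd q w|)%N = (#|'Z_q| ^ #|w|)%N.
Proof.
rewrite -card_chains_on [RHS](card_kernel_mul_image (phi := @bdS V q L j)).
- by congr (_ * _)%N; apply: eq_card => f; rewrite !inE andbAC.
- by rewrite inE is_chain0 supp0_sub.
- by move=> f g; rewrite !inE => /andP[fC fw] /andP[gC gw]; rewrite is_chainB ?supp_subB.
- exact: bdSB.
Qed.

End Chains.


Section SubsetProducts.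
Variables (T : finType) (R : fieldType) (x : T -> R).
Implicit Types (S w : {set T}) (c : T).

Definition odds c := x c / (1 - x c).
Definition bern_weight w := \prod_(c in w) x c * \prod_(c in ~: w) (1 - x c).

Lemma prod_odds_supset S w :
  \prod_(c in w) odds c * (S \subset w)%:R =
  \prod_c (if c \in w then odds c else (c \notin S)%:R).
Proof.
have -> : S \subset w = [forall c, (c \in S) ==> (c \in w)].
  by apply/subsetP/forallP => Sw c; [apply/implyP/Sw | apply/implyP/Sw].
rewrite -prod_natr_forall big_mkcond -big_split /=.
by apply: eq_bigr => c _; case: (c \in w); case: (c \in S); rewrite ?mulr1 ?mul1r ?mulr0.
Qed.

Lemma sum_prod_odds_supset S :
  \sum_(w : {set T}) \prod_(c in w) odds c * (S \subset w)%:R =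
  \prod_c (odds c + (c \notin S)%:R).
Proof.
under [LHS]eq_bigr do rewrite prod_odds_supset.
exact: (sum_set_prod (fun c b => if b then odds c else (c \notin S)%:R)).
Qed.

Lemma sum_bern_weight_union S w :
  \sum_(a : {set T}) bern_weight a * ((a :|: S) == w)%:R =
  \prod_c (x c * (c \in w)%:R + (1 - x c) * ((c \in S) == (c \in w))%:R).
Proof.
rewrite -(sum_set_prod (fun c b => if b then x c * (c \in w)%:R
                                   else (1 - x c) * ((c \in S) == (c \in w))%:R)).
apply: eq_bigr => a _.
have -> : (a :|: S == w) = [forall c, (c \in a :|: S) == (c \in w)].
  by apply/eqP/forallP => [-> //|aSw]; apply/setP => c; apply/eqP.
rewrite -prod_natr_forall /bern_weight big_mkcond [\prod_(c in ~: a) _]big_mkcond.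
rewrite -!big_split /=; apply: eq_bigr => c _; rewrite in_setC in_setU.
by case: (c \in a); rewrite /= ?mulr1 ?mul1r.
Qed.

Hypothesis x_neq1 : forall c, x c != 1.

Lemma subr1_neq0 c : 1 - x c != 0.
Proof. by rewrite subr_eq0 eq_sym x_neq1. Qed.

Lemma prod_odds_add_notin S :
  \prod_c (odds c + (c \notin S)%:R) = \prod_c (1 - x c)^-1 * \prod_(c in S) x c.
Proof.
rewrite [X in _ = _ * X]big_mkcond -big_split /=; apply: eq_bigr => c _.
rewrite /odds; have := subr1_neq0 c.
by case: (c \in S) => /= x1; field.
Qed.

Lemma sum_bern_weight_union_mul S w :
  (\sum_(a : {set T}) bern_weight a * ((a :|: S) == w)%:R) *
  (\sum_(w' : {set T}) \prod_(c in w') odds c * (S \subset w')%:R) =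
  \prod_(c in w) odds c * (S \subset w)%:R.
Proof.
rewrite sum_bern_weight_union sum_prod_odds_supset prod_odds_supset -big_split /=.
apply: eq_bigr => c _; rewrite /odds; have := subr1_neq0 c.
by case: (c \in w); case: (c \in S) => x1 /=; rewrite ?mulr0 ?mulr1 ?add0r ?addr0 ?mul0r //;
  field.
Qed.

End SubsetProducts.

Section FlowRandomCluster.
Variables (V : finType) (L : forall j, {set param V j}) (q : nat) (R : realFieldType).
Variables (j : nat) (x : cellT L j.+1 -> R).
Hypotheses (L_complex : is_cubical_complex L) (q_gt1 : (1 < q)%N).
Hypothesis x_range : forall c, 0 < x c < 1.
Local Notation cell := (cellT L j.+1).
Local Notation chain := (chain V q j.+1).
Implicit Types (w S : {set cell}) (eta : chain).

Lemma x_gt0 c : 0 < x c. Proof. by case/andP: (x_range c). Qed.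
Lemma x_neq1 c : x c != 1. Proof. by case/andP: (x_range c) => _ /lt_eqF ->. Qed.
Lemma subr1_gt0 c : 0 < 1 - x c. Proof. by case/andP: (x_range c); rewrite subr_gt0. Qed.

Lemma odds_gt0 c : 0 < odds x c.
Proof. by rewrite divr_gt0 ?x_gt0 ?subr1_gt0. Qed.

Lemma rho_w_gt0 w : 0 < rho_w x w.
Proof. by apply: prodr_gt0 => c _; apply: odds_gt0. Qed.

Definition Pw_scale : R := ((\sum_w rho_w x w) * #|Sigma q L j.+1|%:R)^-1.

Lemma Pw_scale_gt0 : 0 < Pw_scale.
Proof.
rewrite invr_gt0 mulr_gt0 ?(sumr_gt0 set0 rho_w_gt0) // ltr0n.
by apply/card_gt0P; exists 0; apply: kerbd0.
Qed.

Lemma PwE w eta : Pw x w eta = Pw_scale * (rho_w x w * (eta \in Sigma_down q w)%:R).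
Proof.
rewrite /Pw; have [/setIdP[etaS _]|_] := boolP (eta \in Sigma_down q w); last by rewrite !mulr0.
rewrite /rho /gamma /Pw_scale etaS.
by rewrite !mulr1 mul1r invfM [RHS]mulrC mulrA.
Qed.

Lemma sum_Pw_chains w :
  \sum_(eta : chain) Pw x w eta = Pw_scale * (rho_w x w * #|Sigma_down q w|%:R).
Proof. by under eq_bigr do rewrite PwE; rewrite -mulr_sumr -mulr_sumr sum_natr_mem. Qed.

Lemma sum_Pw_configs eta :
  \sum_w Pw x w eta =
  Pw_scale * ((eta \in Sigma q L j.+1)%:R * \sum_w rho_w x w * (supp L eta \subset w)%:R).
Proof.
rewrite !mulr_sumr; apply: eq_bigr => w _.
by rewrite PwE inE -mulnb natrM; congr (_ * _); apply: mulrCA.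
Qed.

Lemma sum_Pw_gt0 : 0 < \sum_w \sum_(eta : chain) Pw x w eta.
Proof.
apply: sumr_gt0 set0 _ => w; rewrite sum_Pw_chains !mulr_gt0 ?Pw_scale_gt0 ?rho_w_gt0 // ltr0n.
by apply/card_gt0P; exists 0; apply: Sigma_down0.
Qed.

Lemma margSigma_flow eta : margSigma x eta = ell x eta.
Proof.
have x_flow eta' : \sum_w Pw x w eta' = Pw_scale * \prod_c (1 - x c)^-1 * ell_w x eta'.
  rewrite sum_Pw_configs sum_prod_odds_supset prod_odds_add_notin; last exact: x_neq1.
  by rewrite /ell_w -mulrA; congr (_ * _); apply: mulrCA.
rewrite /margSigma /Pjoint -mulr_suml exchange_big /=.
rewrite /ell; apply: div_sum_scale; last exact: x_flow.
by rewrite mulf_neq0 ?gt_eqF ?Pw_scale_gt0 // prodr_gt0 // => c _; rewrite invr_gt0 subr1_gt0.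
Qed.

Lemma condOmega_uniform w eta : condOmega x w eta = uniform R (Sigma_down q w) eta.
Proof.
rewrite /condOmega /margOmega /uniform -sum_natr_mem.
apply: (div_sum_scale (a := Pw_scale * rho_w x w / \sum_w' \sum_(eta' : chain) Pw x w' eta')).
  by apply/lt0r_neq0; rewrite divr_gt0 ?sum_Pw_gt0 // mulr_gt0 ?Pw_scale_gt0 ?rho_w_gt0.
by move=> eta'; rewrite /Pjoint PwE mulrA mulrAC.
Qed.

Lemma phi_wE (p : cell -> R) : (forall c, x c = p c / (p c + q%:R * (1 - p c))) ->
  forall w, phi_w q p w = #|kerbd q L j|%:R * (rho_w x w * #|Sigma_down q w|%:R).
Proof.
move=> xE w; have q0 : (q%:R : R) != 0 by rewrite pnatr_eq0 -lt0n ltnW.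
have card_split := card_Sigma_down_mul_Im_bd q L_complex w.
have card_Zq : #|'Z_q| = q by rewrite card_ord Zp_cast.
rewrite card_Zq in card_split.
have Im0 : (#|Im_bd q w|%:R : R) != 0.
  rewrite pnatr_eq0 -lt0n; have : (0 < q ^ #|w|)%N by rewrite expn_gt0 ltnW.
  by rewrite -card_split muln_gt0 => /andP[].
rewrite /phi_w (eq_bigr _ (fun c _ => odds_rc_param q0 (lt0r_neq0 (x_gt0 c)) (x_neq1 c) (xE c))).
rewrite big_split prodr_const /= -natrX -card_split natrM.
rewrite -[\prod_(c in w) _]/(rho_w x w).
by field.
Qed.

Lemma margOmega_random_cluster (p : cell -> R) :
  (forall c, x c = p c / (p c + q%:R * (1 - p c))) ->
  forall w, margOmega q x w = phi q p w.
Proof.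
move=> xE w; rewrite /margOmega /Pjoint -mulr_suml /phi.
have ker0 : (#|kerbd q L j|%:R : R) != 0.
  by rewrite pnatr_eq0 -lt0n; apply/card_gt0P; exists 0; apply: kerbd0.
apply: (div_sum_scale (a := Pw_scale / #|kerbd q L j|%:R)) => [|w'].
  by apply: mulf_neq0; [apply: lt0r_neq0 Pw_scale_gt0 | rewrite invr_eq0].
by rewrite sum_Pw_chains phi_wE // [RHS]mulrA divfK.
Qed.

Lemma union_law_dirac (mu : {set cell} -> R) S w :
  union_law mu (dirac R S) w = \sum_a mu a * ((a :|: S) == w)%:R.
Proof.
apply: eq_bigr => a _; rewrite (bigD1 S) //= big1 => [|b /negbTE bS]; last first.
  by rewrite /dirac bS mulr0 mul0r.
by rewrite /dirac eqxx mulr1 addr0.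
Qed.

Lemma condSigma_union eta : eta \in Sigma q L j.+1 ->
  forall w, condSigma x eta w = union_law (bern x) (dirac R (supp L eta)) w.
Proof.
move=> etaS w; set S := supp L eta.
have supset_mass_gt0 : 0 < \sum_w' rho_w x w' * (S \subset w')%:R.
  rewrite sum_prod_odds_supset; apply: prodr_gt0 => c _.
  by apply: lt_le_trans (odds_gt0 c) _; rewrite lerDl ler0n.
rewrite /condSigma /margSigma.
rewrite (div_sum_scale (G := fun w' => rho_w x w' * (S \subset w')%:R)
                       (a := Pw_scale / \sum_w' \sum_(eta' : chain) Pw x w' eta')).
- by rewrite union_law_dirac -(sum_bern_weight_union_mul x_neq1 S w) mulfK ?lt0r_neq0.
- by apply/lt0r_neq0; rewrite divr_gt0 ?Pw_scale_gt0 ?sum_Pw_gt0.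
- by move=> w'; rewrite /Pjoint PwE inE etaS mulrAC.
Qed.

End FlowRandomCluster.

Unset Implicit Arguments.

Theorem proposition4p7 (V : finType) (L : forall j, {set param V j})
    (k q : nat) (R : realFieldType) (x : cellT L k -> R) :
  is_cubical_complex L -> (1 <= k)%N -> (2 <= q)%N ->
  (forall c, 0 < x c < 1) ->
  [/\ (* (a) marginal on Sigma is the q-flow model *)
      (forall eta, eta \in Sigma q L k -> margSigma x eta = ell x eta),
      (* (a) P[. | omega] is uniform on Sigma^down(omega) *)
      (forall w eta, eta \in Sigma q L k ->
         condOmega x w eta = uniform R (Sigma_down q w) eta),
      (* (b) marginal on Omega is the plaquette random-cluster model *)
      (forall p : cellT L k -> R,
         (forall c, x c = p c / (p c + q%:R * (1 - p c))) ->
         forall w, margOmega q x w = phi q p w) &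
      (* (b) P[. | eta] = P_x  union  delta_supp(eta) *)
      (forall eta, eta \in Sigma q L k ->
         forall w, condSigma x eta w = union_law (bern x) (dirac R (supp L eta)) w)].
Proof.
case: k x => [//|j] x L_complex _ q_gt1 x_range; split.
- by move=> eta _; apply: margSigma_flow.
- by move=> w eta _; apply: condOmega_uniform.
- by move=> p; apply: margOmega_random_cluster.
- by move=> eta; apply: condSigma_union.
Qed.
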